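(* Let $\mathcal{X}_1,\mathcal{X}_2$ be non-empty sets, $\mathcal{B}_1\subseteq\mathcal{P}(\mathcal{X}_1)\setminus\{\emptyset\}$, $\mathcal{B}_2\subseteq\mathcal{P}(\mathcal{X}_2)\setminus\{\emptyset\}$, and for $i\in\{1,2\}$ let $\underline{P}_i$ be a coherent conditional lower prevision on $\mathcal{C}_i\subseteq\mathcal{C}(\mathcal{X}_i)$ with natural extension $\underline{E}_i$ to $\mathcal{C}(\mathcal{X}_i)$. Let $\{i,j\}=\{1,2\}$. Then for any $f\in\mathcal{G}(\mathcal{X}_i)$, any $h\in\mathcal{G}(\mathcal{X}_j)$ and any $\mathcal{B}_i$-measurable $g\in\mathcal{G}_{\geq0}(\mathcal{X}_i)$, $$(\underline{P}_1\otimes\underline{P}_2)(f+gh)=\underline{E}_i\big(f+g\,\underline{E}_j(h)\big).$$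
   Context: Gambles on a non-empty set $\mathcal{X}$ are bounded real functions; $\mathcal{G}(\mathcal{X})$, $\mathcal{G}_{\geq0}(\mathcal{X})$, $\mathcal{G}_{>0}(\mathcal{X})$ denote all gambles, non-negative gambles, non-negative non-zero gambles. For $\mathcal{A}\subseteq\mathcal{G}(\mathcal{X})$: $\mathrm{posi}(\mathcal{A}):=\{\sum_{i=1}^n\lambda_if_i\colon n\in\mathbb{N},\lambda_i>0,f_i\in\mathcal{A}\}$, $\mathcal{E}(\mathcal{A}):=\mathrm{posi}(\mathcal{A}\cup\mathcal{G}_{>0}(\mathcal{X}))$. A coherent set of desirable gambles $\mathcal{D}\subseteq\mathcal{G}(\mathcal{X})$ satisfies: (D1) $f\geq0,f\neq0\Rightarrow f\in\mathcal{D}$; (D2) $f\in\mathcal{D},\lambda>0\Rightarrow\lambda f\in\mathcal{D}$; (D3) $f,g\in\mathcal{D}\Rightarrow f+g\in\mathcal{D}$; (D4) $f\leq0\Rightarrow f\notin\mathcal{D}$. $\mathcal{C}(\mathcal{X}):=\mathcal{G}(\mathcal{X})\times(\mathcal{P}(\mathcal{X})\setminus\{\emptyset\})$; a conditional lower prevision on $\mathcal{C}\subseteq\mathcal{C}(\mathcal{X})$ is a map $(f,B)\mapsto\underline{P}(f\vert B)\in\mathbb{R}\cup\{\pm\infty\}$. For $\mathcal{D}\subseteq\mathcal{G}(\mathcal{X})$, $\underline{P}_{\mathcal{D}}(f\vert B):=\sup\{\mu\in\mathbb{R}\colon[f-\mu]\mathbb{I}_B\in\mathcal{D}\}$. $\underline{P}$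 is coherent if $\underline{P}=\underline{P}_{\mathcal{D}}$ on its domain for some coherent set of desirable gambles $\mathcal{D}$. For coherent $\underline{P}$ on $\mathcal{C}$, $\mathcal{E}(\underline{P}):=\mathcal{E}(\{[f-\mu]\mathbb{I}_B\colon(f,B)\in\mathcal{C},\mu<\underline{P}(f\vert B)\})$ and its natural extension is $\underline{E}(f\vert B):=\underline{P}_{\mathcal{E}(\underline{P})}(f\vert B)$ for all $(f,B)\in\mathcal{C}(\mathcal{X})$. Unconditional notation: $\underline{P}(f):=\underline{P}(f\vert\mathcal{X})$. Gambles on $\mathcal{X}_i$ are identified with their cylindrical extensions to $\mathcal{X}_1\times\mathcal{X}_2$, events $B\subseteq\mathcal{X}_1$ with $B\times\mathcal{X}_2$ (similarly for $\mathcal{X}_2$). For coherent sets of desirable gambles $\mathcal{D}_1,\mathcal{D}_2$: $\mathcal{D}_1\otimes\mathcal{D}_2:=\mathcal{E}(\mathcal{A}_{1\to2}\cup\mathcal{A}_{2\to1})$, $\mathcal{A}_{1\to2}:=\{f_2(X_2)\mathbb{I}_{B_1}(X_1)\colon f_2\in\mathcal{D}_2,B_1\in\mathcal{B}_1\cup\{\mathcal{X}_1\}\}$, $\mathcal{A}_{2\to1}:=\{f_1(X_1)\mathbb{I}_{B_2}(X_2)\colon f_1\in\mathcal{D}_1,B_2\in\mathcal{B}_2\cup\{\mathcal{X}_2\}\}$. Then $(\underline{P}_1\otimes\underline{P}_2)(f\vert B):=\underline{P}_{\mathcal{D}}(f\vert B)$ for $(f,B)\in\mathcal{C}(\mathcal{X}_1\times\mathcal{X}_2)$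 with $\mathcal{D}=\mathcal{E}(\underline{P}_1)\otimes\mathcal{E}(\underline{P}_2)$. Measurability: for $\mathcal{B}\subseteq\mathcal{P}(\mathcal{X})\setminus\{\emptyset\}$, $g\in\mathcal{G}_{\geq0}(\mathcal{X})$ is simple $\mathcal{B}$-measurable if $g=c_0+\sum_{k=1}^nc_k\mathbb{I}_{B_k}$ for some $n\in\mathbb{N}\cup\{0\}$, $c_0,\dots,c_n\geq0$, $B_k\in\mathcal{B}$; $g\in\mathcal{G}_{\geq0}(\mathcal{X})$ is $\mathcal{B}$-measurable if there is a sequence of simple $\mathcal{B}$-measurable $g_n\in\mathcal{G}_{\geq0}(\mathcal{X})$ with $\sup|g-g_n|\to0$. *)

From Stdlib Require Import Reals Lra.
From Coquelicot Require Import Coquelicot.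
Open Scope R_scope.

(* Events are boolean predicates (classically equivalent to subsets). *)
Definition ind {X : Type} (B : X -> bool) (x : X) : R := if B x then 1 else 0.
Definition nonempty_ev {X : Type} (B : X -> bool) : Prop := exists x, B x = true.
Definition whole {X : Type} : X -> bool := fun _ => true.

Definition gamble {X : Type} (f : X -> R) : Prop := exists M, forall x, Rabs (f x) <= M.
Definition gamble_ge0 {X : Type} (f : X -> R) : Prop := gamble f /\ forall x, 0 <= f x.
Definition gamble_gt0 {X : Type} (f : X -> R) : Prop :=
  gamble_ge0 f /\ exists x, f x <> 0.

Definition posi {X : Type} (A : (X -> R) -> Prop) (g : X -> R) : Prop :=
  exists (n : nat) (lam : nat -> R) (fs : nat -> X -> R),
    (forall i, (i <= n)%nat -> 0 < lam i /\ A (fs i)) /\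
    forall x, g x = sum_f_R0 (fun i => lam i * fs i x) n.

Definition Ecl {X : Type} (A : (X -> R) -> Prop) : (X -> R) -> Prop :=
  posi (fun f => A f \/ gamble_gt0 f).

Definition coherent_D {X : Type} (D : (X -> R) -> Prop) : Prop :=
  (forall f, D f -> gamble f) /\
  (forall f, gamble_gt0 f -> D f) /\
  (forall f lam, D f -> 0 < lam -> D (fun x => lam * f x)) /\
  (forall f g, D f -> D g -> D (fun x => f x + g x)) /\
  (forall f, (forall x, f x <= 0) -> ~ D f).

(* Conditional lower prevision induced by D:
   P_D(f|B) = sup { mu in R : [f - mu] I_B in D }  (sup of empty set = -oo). *)
Definition lowP_D {X : Type} (D : (X -> R) -> Prop) (f : X -> R) (B : X -> bool) : Rbar :=
  Lub_Rbar (fun mu => D (fun x => (f x - mu) * ind B x)).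

Definition domain_ok {X : Type} (C : (X -> R) -> (X -> bool) -> Prop) : Prop :=
  forall f B, C f B -> gamble f /\ nonempty_ev B.

(* A conditional lower prevision P on C is a map; only its values on C matter. *)
Definition coherent_lp {X : Type} (C : (X -> R) -> (X -> bool) -> Prop)
  (P : (X -> R) -> (X -> bool) -> Rbar) : Prop :=
  exists D, coherent_D D /\ forall f B, C f B -> P f B = lowP_D D f B.

Definition EP {X : Type} (C : (X -> R) -> (X -> bool) -> Prop)
  (P : (X -> R) -> (X -> bool) -> Rbar) : (X -> R) -> Prop :=
  Ecl (fun g => exists f B mu, C f B /\ Rbar_lt (Finite mu) (P f B) /\
                  g = (fun x => (f x - mu) * ind B x)).

Definition natext {X : Type} (C : (X -> R) -> (X -> bool) -> Prop)
  (P : (X -> R) -> (X -> bool) -> Rbar) (f : X -> R) (B : X -> bool) : Rbar :=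
  lowP_D (EP C P) f B.

Definition A12 {X1 X2 : Type} (BB1 : (X1 -> bool) -> Prop) (D2 : (X2 -> R) -> Prop)
  (g : X1 * X2 -> R) : Prop :=
  exists f2 B1, D2 f2 /\ (BB1 B1 \/ B1 = whole) /\
    g = (fun z => f2 (snd z) * ind B1 (fst z)).
Definition A21 {X1 X2 : Type} (BB2 : (X2 -> bool) -> Prop) (D1 : (X1 -> R) -> Prop)
  (g : X1 * X2 -> R) : Prop :=
  exists f1 B2, D1 f1 /\ (BB2 B2 \/ B2 = whole) /\
    g = (fun z => f1 (fst z) * ind B2 (snd z)).
Definition prodD {X1 X2 : Type} (BB1 : (X1 -> bool) -> Prop) (BB2 : (X2 -> bool) -> Prop)
  (D1 : (X1 -> R) -> Prop) (D2 : (X2 -> R) -> Prop) : (X1 * X2 -> R) -> Prop :=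
  Ecl (fun g => A12 BB1 D2 g \/ A21 BB2 D1 g).

Definition prodP {X1 X2 : Type} (BB1 : (X1 -> bool) -> Prop) (BB2 : (X2 -> bool) -> Prop)
  (C1 : (X1 -> R) -> (X1 -> bool) -> Prop) (P1 : (X1 -> R) -> (X1 -> bool) -> Rbar)
  (C2 : (X2 -> R) -> (X2 -> bool) -> Prop) (P2 : (X2 -> R) -> (X2 -> bool) -> Rbar)
  (f : X1 * X2 -> R) (B : X1 * X2 -> bool) : Rbar :=
  lowP_D (prodD BB1 BB2 (EP C1 P1) (EP C2 P2)) f B.

Definition simple_meas {X : Type} (BB : (X -> bool) -> Prop) (g : X -> R) : Prop :=
  gamble_ge0 g /\
  exists (c0 : R) (n : nat) (c : nat -> R) (Bs : nat -> X -> bool),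
    0 <= c0 /\ (forall k, (1 <= k <= n)%nat -> 0 <= c k /\ BB (Bs k)) /\
    forall x, g x = c0 + sum_f_R0 (fun k => if (k =? 0)%nat then 0 else c k * ind (Bs k) x) n.

Definition measurable_g {X : Type} (BB : (X -> bool) -> Prop) (g : X -> R) : Prop :=
  gamble_ge0 g /\
  exists gs : nat -> X -> R, (forall m, simple_meas BB (gs m)) /\
    forall eps, 0 < eps -> exists N, forall m, (N <= m)%nat ->
      forall x, Rabs (g x - gs m x) <= eps.

(* Let e := E_2(h) and let D be the product cone E(A_{1->2} \cup A_{2->1}).
   If f + g e - mu is desirable for P_1 and mu' < mu, approximate g uniformly by a simple
   B_1-measurable g_m: then f + g h - mu' dominates (f + g e - mu) + g_m (h - e + delta), which is
   an element of A_{2->1} plus nonnegative multiples of elements of A_{1->2}; this gives ">=".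
   Conversely, if f + g h - mu lies in D, each generator in its decomposition dominates a product
   a(x) b(y) with E_1(a) >= 0 and E_2(b) >= 0. A finite-dimensional Hahn-Banach argument gives a
   linear functional Q >= E_1 on the span of the finitely many gambles on X_1 involved, exact at
   f + g e - mu. Applying Q in x for each fixed y, and then E_2 in y, yields E_1(f + g e) >= mu.
   The case i = 2 follows by swapping the two factors. *)

From Stdlib Require Import Reals Lra Lia.
From Stdlib Require Import FunctionalExtensionality IndefiniteDescription Classical.
From Coquelicot Require Import Coquelicot.
Open Scope R_scope.

Lemma transport_pointwise {X : Type} (S : (X -> R) -> Prop) (a b : X -> R) :
  S a -> (forall x, a x = b x) -> S b.
Proof. intros Ha E; replace b with a; [exact Ha | apply functional_extensionality; exact E]. Qed.

Lemma sum_mult_l (k : R) (F : nat -> R) n :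
  sum_f_R0 (fun i => k * F i) n = k * sum_f_R0 F n.
Proof. rewrite scal_sum; apply sum_eq; intros; ring. Qed.

Lemma sum_opp (F : nat -> R) n : sum_f_R0 (fun i => - F i) n = - sum_f_R0 F n.
Proof.
  replace (- sum_f_R0 F n) with (-1 * sum_f_R0 F n) by ring.
  rewrite <- sum_mult_l; apply sum_eq; intros; ring.
Qed.

Lemma sum_scons_mult (s : R) (t F : nat -> R) n :
  sum_f_R0 (fun j => match j with O => s | S i => t i end * F j) (S n) =
  s * F O + sum_f_R0 (fun i => t i * F (S i)) n.
Proof. rewrite decomp_sum by lia; reflexivity. Qed.

Lemma sum_delta (F : nat -> R) i n : (i <= n)%nat ->
  sum_f_R0 (fun k => (if Nat.eqb k i then 1 else 0) * F k) n = F i.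
Proof.
  induction n as [|n IH]; intros Hi; cbn [sum_f_R0].
  - replace i with O by lia; simpl; ring.
  - destruct (Nat.eq_dec i (S n)) as [->|Hne].
    + rewrite Nat.eqb_refl, (sum_eq _ (fun _ => 0)), sum_cte; [ring|].
      intros k Hk; destruct (Nat.eqb_spec k (S n)); [lia | ring].
    + rewrite IH by lia; destruct (Nat.eqb_spec (S n) i); [lia | ring].
Qed.

Lemma sum_rescale (t F : nat -> R) s n : s <> 0 ->
  sum_f_R0 (fun i => t i * F i) n = s * sum_f_R0 (fun i => t i / s * F i) n.
Proof. intros Hs; rewrite <- sum_mult_l; apply sum_eq; intros; field; exact Hs. Qed.

Lemma gamble_const {X : Type} (c : R) : @gamble X (fun _ => c).
Proof. exists (Rabs c); intros; lra. Qed.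

Lemma gamble_plus {X : Type} (a b : X -> R) :
  gamble a -> gamble b -> gamble (fun x => a x + b x).
Proof.
  intros [Ma Ha] [Mb Hb]; exists (Ma + Mb); intros x.
  eapply Rle_trans; [apply Rabs_triang|]; specialize (Ha x); specialize (Hb x); lra.
Qed.

Lemma gamble_mult {X : Type} (a b : X -> R) :
  gamble a -> gamble b -> gamble (fun x => a x * b x).
Proof.
  intros [Ma Ha] [Mb Hb]; exists (Ma * Mb); intros x.
  rewrite Rabs_mult; apply Rmult_le_compat; auto using Rabs_pos.
Qed.

Lemma gamble_scal {X : Type} (c : R) (a : X -> R) : gamble a -> gamble (fun x => c * a x).
Proof. apply gamble_mult, gamble_const. Qed.

Lemma gamble_opp {X : Type} (a : X -> R) : gamble a -> gamble (fun x => - a x).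
Proof. intros [M H]; exists M; intros x; rewrite Rabs_Ropp; apply H. Qed.

Lemma gamble_minus {X : Type} (a b : X -> R) :
  gamble a -> gamble b -> gamble (fun x => a x - b x).
Proof. intros; apply gamble_plus, gamble_opp; assumption. Qed.

Lemma gamble_sum {X : Type} (F : nat -> X -> R) n :
  (forall i, gamble (F i)) -> gamble (fun x => sum_f_R0 (fun i => F i x) n).
Proof. intros HF; induction n; simpl; [apply HF | apply gamble_plus; auto]. Qed.

Lemma gamble_ind {X : Type} (B : X -> bool) : gamble (ind B).
Proof. exists 1; intros x; unfold ind; destruct (B x); rewrite ?Rabs_R1, ?Rabs_R0; lra. Qed.

Lemma ind_ge0 {X : Type} (B : X -> bool) x : 0 <= ind B x.
Proof. unfold ind; destruct (B x); lra. Qed.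

Lemma gamble_fst {X1 X2 : Type} (a : X1 -> R) : gamble a -> gamble (fun z : X1 * X2 => a (fst z)).
Proof. intros [M H]; exists M; intros; apply H. Qed.

Lemma gamble_snd {X1 X2 : Type} (a : X2 -> R) : gamble a -> gamble (fun z : X1 * X2 => a (snd z)).
Proof. intros [M H]; exists M; intros; apply H. Qed.

Lemma gamble_bound {X : Type} (a : X -> R) :
  gamble a -> exists M, 0 <= M /\ forall x, Rabs (a x) <= M.
Proof.
  intros [M H]; exists (Rabs M); split; [apply Rabs_pos|].
  intros x; eapply Rle_trans; [apply H | apply Rle_abs].
Qed.

Lemma lt_Lub_Rbar (S : R -> Prop) (mu : R) :
  Rbar_lt mu (Lub_Rbar S) -> exists y, S y /\ mu < y.
Proof.
  intros Hlt; apply NNPP; intros Hno.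
  destruct (Lub_Rbar_correct S) as [_ Hlub].
  apply (Rbar_lt_not_le _ _ Hlt), Hlub; intros y Hy; simpl.
  apply Rnot_lt_le; intros Hmy; apply Hno; exists y; auto.
Qed.

Lemma Lub_Rbar_le_of_approx (S T : R -> Prop) :
  (forall mu, S mu -> forall mu', mu' < mu -> T mu') -> Rbar_le (Lub_Rbar S) (Lub_Rbar T).
Proof.
  intros H; destruct (Lub_Rbar_correct T) as [ubT _].
  apply Lub_Rbar_correct; intros mu Hmu.
  destruct (Lub_Rbar T) as [l| |]; simpl; auto.
  - apply Rnot_lt_le; intros Hl.
    specialize (ubT ((mu + l) / 2) (H mu Hmu ((mu + l) / 2) ltac:(lra))); simpl in ubT; lra.
  - exact (ubT (mu - 1) (H mu Hmu (mu - 1) ltac:(lra))).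
Qed.

Lemma Lub_Rbar_finite (S : R -> Prop) (m M : R) :
  S m -> (forall x, S x -> x <= M) -> is_finite (Lub_Rbar S).
Proof.
  intros Hm HM; destruct (Lub_Rbar_correct S) as [ub lub].
  assert (Hle : Rbar_le (Lub_Rbar S) M) by (apply lub; intros x Hx; apply HM, Hx).
  specialize (ub m Hm).
  destruct (Lub_Rbar S); [reflexivity | destruct Hle | destruct ub].
Qed.

Section Cone.
Context {X : Type} (A : (X -> R) -> Prop).

Lemma posi_gen (a : X -> R) : A a -> posi A a.
Proof.
  intros Ha; exists O, (fun _ => 1), (fun _ => a); split.
  - intros; split; [lra | exact Ha].
  - intros; simpl; ring.
Qed.

Lemma posi_scal (g : X -> R) l : posi A g -> 0 < l -> posi A (fun x => l * g x).
Proof.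
  intros [n [lam [fs [Hfs Eg]]]] Hl; exists n, (fun i => l * lam i), fs; split.
  - intros i Hi; destruct (Hfs i Hi); split; [apply Rmult_lt_0_compat|]; assumption.
  - intros x; rewrite Eg, <- sum_mult_l; apply sum_eq; intros; ring.
Qed.

Lemma posi_plus (g1 g2 : X -> R) : posi A g1 -> posi A g2 -> posi A (fun x => g1 x + g2 x).
Proof.
  intros [n1 [l1 [f1 [H1 E1]]]] [n2 [l2 [f2 [H2 E2]]]].
  exists (n1 + S n2)%nat,
    (fun i => if Nat.leb i n1 then l1 i else l2 (i - S n1)%nat),
    (fun i => if Nat.leb i n1 then f1 i else f2 (i - S n1)%nat); split.
  - intros i Hi; destruct (Nat.leb_spec i n1); [apply H1 | apply H2]; lia.
  - intros x; rewrite (tech2 _ n1) by lia.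
    replace (n1 + S n2 - S n1)%nat with n2 by lia.
    rewrite E1, E2; f_equal; apply sum_eq; intros i Hi.
    + destruct (Nat.leb_spec i n1); [reflexivity | lia].
    + destruct (Nat.leb_spec (S n1 + i) n1); [lia|].
      replace (S n1 + i - S n1)%nat with i by lia; reflexivity.
Qed.

Lemma posi_plus_nonneg (g a : X -> R) c :
  posi A g -> 0 <= c -> A a -> posi A (fun x => g x + c * a x).
Proof.
  intros Hg Hc Ha; destruct (Req_dec c 0) as [->|Hc0].
  - apply (transport_pointwise _ g); [exact Hg | intros; ring].
  - apply posi_plus; [exact Hg|].
    apply posi_scal; [apply posi_gen, Ha | lra].
Qed.

Lemma posi_incl (K : (X -> R) -> Prop) (g : X -> R) :
  (forall a, A a -> K a) ->
  (forall a l, K a -> 0 < l -> K (fun x => l * a x)) ->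
  (forall a b, K a -> K b -> K (fun x => a x + b x)) ->
  posi A g -> K g.
Proof.
  intros HA Hscal Hplus [n [lam [fs [Hfs Eg]]]].
  apply (transport_pointwise _ (fun x => sum_f_R0 (fun i => lam i * fs i x) n));
    [clear Eg | intros; symmetry; apply Eg].
  induction n as [|n IH]; simpl.
  - destruct (Hfs O) as [Hl Ha]; auto.
  - destruct (Hfs (S n)) as [Hl Ha]; [lia|].
    apply Hplus; [apply IH; intros; apply Hfs; lia | auto].
Qed.

End Cone.

Section Extension.
Context {X : Type} (A : (X -> R) -> Prop).

Lemma Ecl_up (G F : X -> R) :
  Ecl A G -> gamble G -> gamble F -> (forall x, G x <= F x) -> Ecl A F.
Proof.
  intros HG gG gF Hle; destruct (classic (exists x, F x <> G x)) as [[x0 Hx0]|Heq].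
  - apply (transport_pointwise _ (fun x => G x + (F x - G x))); [|intros; ring].
    apply posi_plus, posi_gen; [exact HG|right].
    split; [split; [apply gamble_minus; assumption | intros x; specialize (Hle x); lra]|].
    exists x0; lra.
  - apply (transport_pointwise _ G); [exact HG|].
    intros x; apply NNPP; intros Hx; apply Heq; exists x; auto.
Qed.

Lemma Ecl_coherent (D : (X -> R) -> Prop) :
  coherent_D D -> (forall a, A a -> D a) -> coherent_D (Ecl A).
Proof.
  intros cD HA; destruct cD as (Dg & Dpos & Dscal & Dplus & Dneg).
  assert (Hsub : forall g, Ecl A g -> D g).
  { intros g; apply posi_incl; auto; intros a [Ha|Ha]; auto. }
  repeat split.
  - intros g Hg; apply Dg, Hsub, Hg.
  - intros g Hg; apply posi_gen; right; exact Hg.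
  - intros g l Hg Hl; apply posi_scal; assumption.
  - intros f g Hf Hg; apply posi_plus; assumption.
  - intros f Hf Hd; apply (Dneg f Hf), Hsub, Hd.
Qed.
End Extension.

(* [real] sends +oo and -oo to 0; [low] is only applied to gambles, where [lowP_D] is finite. *)
Definition low {X : Type} (D : (X -> R) -> Prop) (phi : X -> R) : R :=
  real (lowP_D D phi whole).

Lemma lowP_D_whole {X : Type} (D : (X -> R) -> Prop) (phi : X -> R) :
  lowP_D D phi whole = Lub_Rbar (fun mu => D (fun x => phi x - mu)).
Proof.
  apply Lub_Rbar_eqset; intros mu; split; intros H;
    (eapply transport_pointwise; [exact H | intros x; unfold ind, whole; ring]).
Qed.

Lemma low_ext {X : Type} (D : (X -> R) -> Prop) (a b : X -> R) :
  (forall x, a x = b x) -> low D a = low D b.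
Proof. intros E; f_equal; apply functional_extensionality, E. Qed.

Section LowerPrevision.
Context {X : Type} (x0 : X) (D : (X -> R) -> Prop) (cD : coherent_D D).

Lemma D_gamble (a : X -> R) : D a -> gamble a.
Proof. apply cD. Qed.

Lemma D_gt0 (a : X -> R) : gamble_gt0 a -> D a.
Proof. apply cD. Qed.

Lemma D_not_nonpos (a : X -> R) : (forall x, a x <= 0) -> ~ D a.
Proof. apply cD. Qed.

Lemma D_ge_pos (a : X -> R) c : gamble a -> 0 < c -> (forall x, c <= a x) -> D a.
Proof.
  intros ga Hc Ha; apply D_gt0; split; [split; [exact ga | intros x; specialize (Ha x); lra]|].
  exists x0; specialize (Ha x0); lra.
Qed.

Lemma D_scal (a : X -> R) l : D a -> 0 < l -> D (fun x => l * a x).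
Proof. apply cD. Qed.

Lemma D_plus (a b : X -> R) : D a -> D b -> D (fun x => a x + b x).
Proof. apply cD. Qed.

Lemma lowP_D_lt_mem (f : X -> R) (B : X -> bool) (mu : R) :
  nonempty_ev B -> Rbar_lt mu (lowP_D D f B) -> D (fun x => (f x - mu) * ind B x).
Proof.
  intros [xB HxB] Hlt; destruct (lt_Lub_Rbar _ _ Hlt) as [y [Hy Hmu]].
  apply (transport_pointwise _ (fun x => (f x - y) * ind B x + (y - mu) * ind B x));
    [|intros; ring].
  apply D_plus; [exact Hy|]; apply D_gt0; split; [split|].
  - apply gamble_scal, gamble_ind.
  - intros x; apply Rmult_le_pos; [lra | apply ind_ge0].
  - exists xB; unfold ind; rewrite HxB; lra.
Qed.

Lemma lowP_D_whole_finite (phi : X -> R) : gamble phi ->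
  lowP_D D phi whole = Finite (low D phi).
Proof.
  intros gphi; destruct (gamble_bound phi gphi) as [M [_ HM]].
  unfold low; rewrite lowP_D_whole; symmetry; apply (Lub_Rbar_finite _ (- M - 1) M).
  - apply (D_ge_pos _ 1); [apply gamble_minus; [exact gphi | apply gamble_const] | lra |].
    intros x; specialize (HM x); apply Rabs_le_between in HM; lra.
  - intros mu Hmu; apply Rnot_lt_le; intros Hlt; refine (D_not_nonpos _ _ Hmu).
    intros x; specialize (HM x); apply Rabs_le_between in HM; lra.
Qed.

Lemma mem_le_low (phi : X -> R) mu : D (fun x => phi x - mu) -> mu <= low D phi.
Proof.
  intros Hmu.
  assert (gphi : gamble phi).
  { apply (transport_pointwise _ (fun x => (phi x - mu) + mu)); [|intros; ring].
    apply gamble_plus; [apply D_gamble, Hmu | apply gamble_const]. }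
  destruct (Lub_Rbar_correct (fun mu => D (fun x => phi x - mu))) as [ub _].
  specialize (ub mu Hmu); rewrite <- lowP_D_whole, lowP_D_whole_finite in ub by exact gphi.
  exact ub.
Qed.

Lemma lt_low_mem (phi : X -> R) mu : gamble phi -> mu < low D phi -> D (fun x => phi x - mu).
Proof.
  intros gphi Hmu.
  assert (Hlt : Rbar_lt mu (lowP_D D phi whole))
    by (rewrite lowP_D_whole_finite by exact gphi; exact Hmu).
  eapply transport_pointwise; [apply lowP_D_lt_mem; [exists x0; reflexivity | exact Hlt]|].
  intros x; unfold ind, whole; ring.
Qed.

Lemma low_ge (phi : X -> R) c : gamble phi -> (forall x, c <= phi x) -> c <= low D phi.
Proof.
  intros gphi Hc; apply le_epsilon; intros eps Heps.
  replace c with ((c - eps) + eps) at 1 by ring; apply Rplus_le_compat_r, mem_le_low.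
  apply (D_ge_pos _ eps); [apply gamble_minus; [exact gphi | apply gamble_const] | exact Heps|].
  intros x; specialize (Hc x); lra.
Qed.

Lemma low_ge0_of_mem (a : X -> R) : D a -> 0 <= low D a.
Proof.
  intros Ha; apply mem_le_low; eapply transport_pointwise; [exact Ha | intros; simpl; ring].
Qed.

Lemma low_superadd (a b : X -> R) : gamble a -> gamble b ->
  low D a + low D b <= low D (fun x => a x + b x).
Proof.
  intros ga gb; apply le_epsilon; intros eps Heps.
  assert (Ha := lt_low_mem a (low D a - eps / 2) ga ltac:(lra)).
  assert (Hb := lt_low_mem b (low D b - eps / 2) gb ltac:(lra)).
  enough (low D a - eps / 2 + (low D b - eps / 2) <= low D (fun x => a x + b x)) by lra.
  apply mem_le_low, (transport_pointwise _ _ _ (D_plus _ _ Ha Hb)); intros; ring.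
Qed.

Lemma low_zero : low D (fun _ => 0) = 0.
Proof.
  apply Rle_antisym; [|apply low_ge; [apply gamble_const | intros; lra]].
  apply Rnot_lt_le; intros Hpos.
  assert (Hmem := lt_low_mem (fun _ => 0) (low D (fun _ => 0) / 2) (gamble_const 0) ltac:(lra)).
  refine (D_not_nonpos _ _ Hmem); intros; lra.
Qed.

Lemma low_hom_ge (a : X -> R) l : 0 < l -> gamble a -> l * low D a <= low D (fun x => l * a x).
Proof.
  intros Hl ga; apply le_epsilon; intros eps Heps.
  assert (Hmu := lt_low_mem a (low D a - eps / l) ga).
  assert (0 < eps / l) by (apply Rdiv_lt_0_compat; assumption).
  specialize (Hmu ltac:(lra)).
  enough (Hk : l * (low D a - eps / l) <= low D (fun x => l * a x)).
  { replace (l * (low D a - eps / l)) with (l * low D a - eps) in Hk by (field; lra); lra. }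
  apply mem_le_low, (transport_pointwise _ _ _ (D_scal _ l Hmu Hl)).
  intros; field; lra.
Qed.

Lemma low_hom (a : X -> R) l : 0 <= l -> gamble a -> low D (fun x => l * a x) = l * low D a.
Proof.
  intros Hl ga; destruct (Req_dec l 0) as [->|Hl0].
  - rewrite (low_ext _ _ (fun _ => 0)), low_zero by (intros; ring); ring.
  - apply Rle_antisym; [|apply low_hom_ge; [lra | exact ga]].
    assert (Hinv := low_hom_ge (fun x => l * a x) (/ l)
                      ltac:(apply Rinv_0_lt_compat; lra) (gamble_scal _ _ ga)).
    rewrite (low_ext _ (fun x => / l * (l * a x)) a) in Hinv by (intros; field; exact Hl0).
    apply (Rmult_le_compat_l l) in Hinv; [|lra].
    rewrite <- Rmult_assoc, Rinv_r, Rmult_1_l in Hinv; assumption.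
Qed.

Lemma low_plus_const (a : X -> R) c : gamble a -> low D (fun x => a x + c) = low D a + c.
Proof.
  intros ga; apply Rle_antisym.
  - assert (H := low_superadd (fun x => a x + c) (fun _ => - c)
                   (gamble_plus _ _ ga (gamble_const c)) (gamble_const _)).
    rewrite (low_ext _ (fun x => a x + c + - c) a) in H by (intros; ring).
    assert (- c <= low D (fun _ => - c)) by (apply low_ge; [apply gamble_const | intros; lra]).
    lra.
  - assert (H := low_superadd a (fun _ => c) ga (gamble_const c)).
    assert (c <= low D (fun _ => c)) by (apply low_ge; [apply gamble_const | intros; lra]).
    lra.
Qed.

Lemma low_mono (a b : X -> R) : gamble a -> gamble b -> (forall x, a x <= b x) ->
  low D a <= low D b.
Proof.
  intros ga gb Hab.
  assert (H := low_superadd a (fun x => b x - a x) ga (gamble_minus _ _ gb ga)).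
  rewrite (low_ext _ (fun x => a x + (b x - a x)) b) in H by (intros; ring).
  assert (0 <= low D (fun x => b x - a x))
    by (apply low_ge; [apply gamble_minus; assumption | intros x; specialize (Hab x); lra]).
  lra.
Qed.

Lemma low_sum (F : nat -> X -> R) n : (forall i, gamble (F i)) ->
  sum_f_R0 (fun i => low D (F i)) n <= low D (fun x => sum_f_R0 (fun i => F i x) n).
Proof.
  intros gF; induction n as [|n IH]; simpl; [right; reflexivity|].
  eapply Rle_trans; [apply Rplus_le_compat_r, IH|].
  apply low_superadd; [apply gamble_sum | ]; apply gF.
Qed.

Lemma low_plus_low_opp_le0 (a : X -> R) : gamble a -> low D a + low D (fun x => - a x) <= 0.
Proof.
  intros ga; rewrite <- low_zero, (low_ext _ (fun _ => 0) (fun x => a x + - a x)) by (intros; ring).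
  apply low_superadd; [exact ga | apply gamble_opp, ga].
Qed.
End LowerPrevision.

Lemma EP_coherent {X : Type} (C : (X -> R) -> (X -> bool) -> Prop)
  (P : (X -> R) -> (X -> bool) -> Rbar) :
  domain_ok C -> coherent_lp C P -> coherent_D (EP C P).
Proof.
  intros hC [D [cD HP]]; apply (Ecl_coherent _ D cD).
  intros a [f [B [mu [HfB [Hlt ->]]]]]; rewrite HP in Hlt by exact HfB.
  apply (lowP_D_lt_mem D cD); [apply (hC f B HfB) | exact Hlt].
Qed.

Definition comb {X : Type} (v : nat -> X -> R) (t : nat -> R) (n : nat) (x : X) : R :=
  sum_f_R0 (fun i => t i * v i x) n.

Lemma gamble_comb {X : Type} (v : nat -> X -> R) t n :
  (forall i, gamble (v i)) -> gamble (comb v t n).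
Proof. intros gv; apply (gamble_sum (fun i x => t i * v i x)); intros; apply gamble_scal, gv. Qed.

Section DominatedExtension.
Context {X : Type} (p : (X -> R) -> R)
  (p_subadd : forall a b, gamble a -> gamble b -> p (fun x => a x + b x) <= p a + p b)
  (p_hom : forall l a, 0 <= l -> gamble a -> p (fun x => l * a x) = l * p a)
  (v : nat -> X -> R) (gv : forall i, gamble (v i)).

(* [q] stands for the linear functional [comb v t n |-> sum_i t i * q i] on the span of the
   [v i]; domination by [p] makes it independent of the representation. *)
Definition dominated (q : nat -> R) (n : nat) : Prop :=
  forall t, sum_f_R0 (fun i => t i * q i) n <= p (comb v t n).

Let p_ext (a b : X -> R) : (forall x, a x = b x) -> p a = p b.
Proof. intros E; f_equal; apply functional_extensionality, E. Qed.

Lemma dominated_extend_of_bounds q n c :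
  dominated q n ->
  (forall t, sum_f_R0 (fun i => t i * q i) n - p (fun x => comb v t n x - v (S n) x) <= c) ->
  (forall t, c <= p (fun x => comb v t n x + v (S n) x) - sum_f_R0 (fun i => t i * q i) n) ->
  dominated (fun i => if Nat.eqb i (S n) then c else q i) (S n).
Proof.
  intros Hq Hlo Hhi t; cbn [sum_f_R0]; rewrite Nat.eqb_refl.
  rewrite (sum_eq _ (fun i => t i * q i))
    by (intros i Hi; destruct (Nat.eqb_spec i (S n)); [lia | reflexivity]).
  rewrite (p_ext _ (fun x => comb v t n x + t (S n) * v (S n) x)) by reflexivity.
  set (s := t (S n)); set (l := sum_f_R0 (fun i => t i * q i) n).
  destruct (Rtotal_order s 0) as [Hs|[Hs|Hs]].
  - set (t' := fun i => t i / - s).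
    assert (El : l = - s * sum_f_R0 (fun i => t' i * q i) n) by (apply sum_rescale; lra).
    assert (Ep : p (fun x => comb v t n x + s * v (S n) x)
                 = - s * p (fun x => comb v t' n x - v (S n) x)).
    { rewrite <- p_hom by (lra || apply gamble_minus, gv; apply gamble_comb, gv).
      apply p_ext; intros x; unfold comb.
      rewrite (sum_rescale t (fun i => v i x) (- s)) by lra; unfold t'; ring. }
    specialize (Hlo t'); rewrite El, Ep.
    apply (Rmult_le_compat_l (- s)) in Hlo; lra.
  - rewrite Hs, (p_ext _ (comb v t n)) by (intros; ring); rewrite Rmult_0_l, Rplus_0_r; apply Hq.
  - set (t' := fun i => t i / s).
    assert (El : l = s * sum_f_R0 (fun i => t' i * q i) n) by (apply sum_rescale; lra).
    assert (Ep : p (fun x => comb v t n x + s * v (S n) x)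
                 = s * p (fun x => comb v t' n x + v (S n) x)).
    { rewrite <- p_hom by (lra || apply gamble_plus, gv; apply gamble_comb, gv).
      apply p_ext; intros x; unfold comb.
      rewrite (sum_rescale t (fun i => v i x) s) by lra; unfold t'; ring. }
    specialize (Hhi t'); rewrite El, Ep.
    apply (Rmult_le_compat_l s) in Hhi; lra.
Qed.

(* The Hahn-Banach step: subadditivity of [p] puts every lower bound below every upper bound of
   [dominated_extend_of_bounds], and completeness of R provides a value in between. *)
Lemma dominated_extend q n : dominated q n ->
  exists c, dominated (fun i => if Nat.eqb i (S n) then c else q i) (S n).
Proof.
  intros Hq.
  set (u := v (S n)); set (l := fun t => sum_f_R0 (fun i => t i * q i) n).
  assert (gu : gamble u) by apply gv.
  assert (Hsplit : forall t t', l t + l t'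
            <= p (fun x => comb v t n x - u x) + p (fun x => comb v t' n x + u x)).
  { intros t t'; eapply Rle_trans; [|apply p_subadd];
      [| apply gamble_minus | apply gamble_plus]; auto using gamble_comb.
    unfold l; rewrite <- plus_sum.
    rewrite (sum_eq _ (fun i => (t i + t' i) * q i)) by (intros; ring).
    eapply Rle_trans; [apply (Hq (fun i => t i + t' i))|]; right; apply p_ext; intros x.
    unfold comb; rewrite (sum_eq _ (fun i => t i * v i x + t' i * v i x)) by (intros; ring).
    rewrite plus_sum; ring. }
  set (E := fun r => exists t, r = l t - p (fun x => comb v t n x - u x)).
  assert (Hbound : bound E).
  { exists (p (fun x => comb v (fun _ => 0) n x + u x) - l (fun _ => 0)).
    intros r [t ->]; specialize (Hsplit t (fun _ => 0)); lra. }
  destruct (completeness E Hbound) as [c [Hub Hlub]].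
  { eexists; exists (fun _ => 0); reflexivity. }
  exists c; apply dominated_extend_of_bounds; [exact Hq | |].
  - intros t; apply Hub; exists t; reflexivity.
  - intros t'; enough (Hc : c <= p (fun x => comb v t' n x + u x) - l t') by exact Hc.
    apply Hlub; intros r [t ->]; specialize (Hsplit t t'); lra.
Qed.

Lemma dominated_exists c0 : (forall s, s * c0 <= p (fun x => s * v O x)) ->
  forall n, exists q, q O = c0 /\ dominated q n.
Proof.
  intros H0 n; induction n as [|n [q [Hq0 Hq]]].
  - exists (fun _ => c0); split; [reflexivity | intros t; apply H0].
  - destruct (dominated_extend q n Hq) as [c Hc].
    exists (fun i => if Nat.eqb i (S n) then c else q i); split; [exact Hq0 | exact Hc].
Qed.
End DominatedExtension.

Section DominatingPrevision.
Context {X : Type} (x0 : X) (D : (X -> R) -> Prop) (cD : coherent_D D).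

Lemma dominating_linear_prevision (v : nat -> X -> R) n :
  (forall i, gamble (v i)) ->
  exists q, q O = low D (v O) /\
    forall t, low D (comb v t n) <= sum_f_R0 (fun i => t i * q i) n.
Proof.
  intros gv; set (p := fun w : X -> R => - low D (fun x => - w x)).
  assert (p_subadd : forall a b, gamble a -> gamble b -> p (fun x => a x + b x) <= p a + p b).
  { intros a b ga gb; unfold p.
    rewrite (low_ext _ (fun x => - (a x + b x)) (fun x => - a x + - b x)) by (intros; ring).
    pose proof (low_superadd x0 D cD _ _ (gamble_opp _ ga) (gamble_opp _ gb)); lra. }
  assert (p_hom : forall l a, 0 <= l -> gamble a -> p (fun x => l * a x) = l * p a).
  { intros l a Hl ga; unfold p.
    rewrite (low_ext _ (fun x => - (l * a x)) (fun x => l * - a x)) by (intros; ring).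
    rewrite (low_hom x0 D cD) by (auto using gamble_opp); ring. }
  assert (H0 : forall s, s * low D (v O) <= p (fun x => s * v O x)).
  { intros s; destruct (Rle_or_lt 0 s) as [Hs|Hs].
    - rewrite p_hom by auto; apply Rmult_le_compat_l; [exact Hs|].
      pose proof (low_plus_low_opp_le0 x0 D cD _ (gv O)); unfold p; lra.
    - unfold p.
      rewrite (low_ext _ (fun x => - (s * v O x)) (fun x => - s * v O x)) by (intros; ring).
      rewrite (low_hom x0 D cD) by (auto || lra); lra. }
  destruct (dominated_exists p p_subadd p_hom v gv _ H0 n) as [q [Hq0 Hq]].
  exists q; split; [exact Hq0|]; intros t.
  specialize (Hq (fun i => - t i)); unfold p in Hq.
  rewrite (sum_eq _ (fun i => - (t i * q i))), sum_opp in Hq by (intros; ring).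
  rewrite (low_ext _ _ (comb v t n)) in Hq; [lra|].
  intros x; unfold comb; rewrite (sum_eq _ (fun i => - (t i * v i x))), sum_opp by (intros; ring).
  ring.
Qed.

Lemma low_le_dominating_coeff (v : nat -> X -> R) (q : nat -> R) n i :
  (forall t, low D (comb v t n) <= sum_f_R0 (fun i => t i * q i) n) ->
  (i <= n)%nat -> low D (v i) <= q i.
Proof.
  intros Hq Hi; specialize (Hq (fun k => if Nat.eqb k i then 1 else 0)); cbv beta in Hq.
  rewrite sum_delta in Hq by exact Hi.
  rewrite (low_ext _ _ (v i)) in Hq; [exact Hq|].
  intros x; unfold comb; apply (sum_delta (fun k => v k x)), Hi.
Qed.

Lemma low_ge_linear_on_span (phi a0 : X -> R) (a : nat -> X -> R) n :
  gamble phi -> gamble a0 -> (forall i, gamble (a i)) ->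
  0 <= low D a0 -> (forall i, (i <= n)%nat -> 0 <= low D (a i)) ->
  exists q0 (q : nat -> R), 0 <= q0 /\ (forall i, (i <= n)%nat -> 0 <= q i) /\
    forall s0 (s : nat -> R),
      (forall x, sum_f_R0 (fun i => a i x * s i) n <= phi x + a0 x * s0) ->
      sum_f_R0 (fun i => q i * s i) n <= low D phi + q0 * s0.
Proof.
  intros gphi ga0 ga Ha0 Ha.
  pose (v := fun j => match j with O => phi | S O => a0 | S (S i) => a i end).
  assert (gv : forall j, gamble (v j)) by (intros [|[|i]]; [exact gphi | exact ga0 | apply ga]).
  destruct (dominating_linear_prevision v (S (S n)) gv) as [q [Hq0 Hq]].
  assert (Hqv : forall i, (i <= S (S n))%nat -> low D (v i) <= q i)
    by (intros i; apply (low_le_dominating_coeff v q), Hq).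
  exists (q 1%nat), (fun i => q (S (S i))); split; [|split].
  - eapply Rle_trans; [exact Ha0 | exact (Hqv 1%nat ltac:(lia))].
  - intros i Hi; eapply Rle_trans; [exact (Ha i Hi) | exact (Hqv (S (S i)) ltac:(lia))].
  - intros s0 s Hs.
    pose (t := fun j => match j with O => 1 | S O => s0 | S (S i) => - s i end).
    assert (Hpos : 0 <= low D (comb v t (S (S n)))).
    { apply (low_ge x0 D cD); [apply gamble_comb, gv |]; intros x; unfold comb, t.
      rewrite !sum_scons_mult, (sum_eq _ (fun i => - (a i x * s i))), sum_opp
        by (intros; simpl; ring).
      specialize (Hs x); simpl; lra. }
    assert (Et : sum_f_R0 (fun i => t i * q i) (S (S n))
                 = q O + s0 * q 1%nat - sum_f_R0 (fun i => q (S (S i)) * s i) n).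
    { unfold t; rewrite !sum_scons_mult.
      rewrite (sum_eq _ (fun i => - (q (S (S i)) * s i))), sum_opp by (intros; ring); ring. }
    specialize (Hq t); change (q O = low D phi) in Hq0; lra.
Qed.
End DominatingPrevision.

Lemma measurable_approx {X : Type} (BB : (X -> bool) -> Prop) (g : X -> R) eps :
  measurable_g BB g -> 0 < eps ->
  exists gm, simple_meas BB gm /\ forall x, Rabs (g x - gm x) <= eps.
Proof.
  intros [_ [gs [Hgs Hconv]]] Heps; destruct (Hconv eps Heps) as [N HN].
  exists (gs N); split; [apply Hgs | apply HN; lia].
Qed.

Section Product.
Context {Y1 Y2 : Type} (y1 : Y1) (y2 : Y2)
  (BB1 : (Y1 -> bool) -> Prop) (BB2 : (Y2 -> bool) -> Prop)
  (D1 : (Y1 -> R) -> Prop) (D2 : (Y2 -> R) -> Prop)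
  (cD1 : coherent_D D1) (cD2 : coherent_D D2).

Lemma low_ge0_of_product_bound (phi a0 : Y1 -> R) (b0 : Y2 -> R)
  (a : nat -> Y1 -> R) (b : nat -> Y2 -> R) n :
  gamble phi -> gamble a0 -> gamble b0 -> (forall i, gamble (a i) /\ gamble (b i)) ->
  0 <= low D1 a0 -> low D2 b0 <= 0 ->
  (forall i, (i <= n)%nat -> 0 <= low D1 (a i) /\ 0 <= low D2 (b i)) ->
  (forall x y, sum_f_R0 (fun i => a i x * b i y) n <= phi x + a0 x * b0 y) ->
  0 <= low D1 phi.
Proof.
  intros gphi ga0 gb0 gab Ha0 Hb0 Hab Hbound.
  destruct (low_ge_linear_on_span y1 D1 cD1 phi a0 a n gphi ga0 (fun i => proj1 (gab i)) Ha0
              (fun i Hi => proj1 (Hab i Hi))) as [q0 [q (Hq0 & Hq & Hspan)]].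
  pose (beta := fun y => sum_f_R0 (fun i => q i * b i y) n).
  assert (gbeta : gamble beta)
    by (apply (gamble_sum (fun i y => q i * b i y)); intros; apply gamble_scal, gab).
  assert (Hlow_beta : 0 <= low D2 beta).
  { eapply Rle_trans; [|apply (low_sum y2 D2 cD2 (fun i y => q i * b i y))].
    - apply Rle_trans with (sum_f_R0 (fun _ => 0) n); [rewrite sum_cte; lra|].
      apply sum_Rle; intros i Hi; rewrite (low_hom y2 D2 cD2) by (apply gab || apply Hq, Hi).
      apply Rmult_le_pos; [apply Hq | apply Hab]; exact Hi.
    - intros; apply gamble_scal, gab. }
  assert (Hup_beta : low D2 beta <= low D1 phi + q0 * low D2 b0).
  { rewrite <- (low_hom y2 D2 cD2) by assumption.
    rewrite Rplus_comm, <- (low_plus_const y2 D2 cD2) by (apply gamble_scal, gb0).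
    apply (low_mono y2 D2 cD2);
      [exact gbeta | apply gamble_plus; [apply gamble_scal, gb0 | apply gamble_const] |].
    intros y; specialize (Hspan (b0 y) (fun i => b i y) (fun x => Hbound x y)); unfold beta; lra. }
  nra.
Qed.

Lemma prod_generator_minorant (G : Y1 * Y2 -> R) :
  (A12 BB1 D2 G \/ A21 BB2 D1 G) \/ gamble_gt0 G ->
  exists a b, gamble a /\ gamble b /\ 0 <= low D1 a /\ 0 <= low D2 b /\
    forall x y, a x * b y <= G (x, y).
Proof.
  intros [[[f2 [B1 [Hf2 [_ ->]]]] | [f1 [B2 [Hf1 [_ ->]]]]] | [[_ HG] _]].
  - exists (ind B1), f2; repeat split; [apply gamble_ind | apply (D_gamble D2 cD2), Hf2 | | |].
    + apply (low_ge y1 D1 cD1); [apply gamble_ind | apply ind_ge0].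
    + apply (low_ge0_of_mem y2 D2 cD2), Hf2.
    + intros x y; simpl; lra.
  - exists f1, (ind B2); repeat split; [apply (D_gamble D1 cD1), Hf1 | apply gamble_ind | | |].
    + apply (low_ge0_of_mem y1 D1 cD1), Hf1.
    + apply (low_ge y2 D2 cD2); [apply gamble_ind | apply ind_ge0].
    + intros x y; simpl; lra.
  - exists (fun _ => 0), (fun _ => 0); repeat split; try apply gamble_const.
    + apply (low_ge y1 D1 cD1); [apply gamble_const | intros; lra].
    + apply (low_ge y2 D2 cD2); [apply gamble_const | intros; lra].
    + intros x y; rewrite Rmult_0_l; apply HG.
Qed.

Lemma prodD_product_minorants (F : Y1 * Y2 -> R) :
  prodD BB1 BB2 D1 D2 F ->
  exists n (a : nat -> Y1 -> R) (b : nat -> Y2 -> R),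
    (forall i, gamble (a i) /\ gamble (b i)) /\
    (forall i, (i <= n)%nat -> 0 <= low D1 (a i) /\ 0 <= low D2 (b i)) /\
    forall x y, sum_f_R0 (fun i => a i x * b i y) n <= F (x, y).
Proof.
  intros [n [lam [fs [Hfs EF]]]].
  assert (Hchoice : forall i, exists ab : (Y1 -> R) * (Y2 -> R),
            gamble (fst ab) /\ gamble (snd ab) /\
            ((i <= n)%nat -> 0 <= low D1 (fst ab) /\ 0 <= low D2 (snd ab) /\
                            forall x y, fst ab x * snd ab y <= fs i (x, y))).
  { intros i; destruct (Nat.le_gt_cases i n) as [Hi|Hi].
    - destruct (prod_generator_minorant (fs i) (proj2 (Hfs i Hi)))
        as [a [b (ga & gb & Ha & Hb & Hab)]].
      exists (a, b); simpl; auto.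
    - exists (fun _ => 0, fun _ => 0); simpl.
      split; [|split]; [apply gamble_const | apply gamble_const | intros; lia]. }
  destruct (functional_choice _ Hchoice) as [ab Hab].
  exists n, (fun i x => lam i * fst (ab i) x), (fun i => snd (ab i)); repeat split.
  - apply gamble_scal, Hab.
  - apply Hab.
  - rewrite (low_hom y1 D1 cD1) by (apply Hab || (apply Rlt_le, Hfs; assumption)).
    apply Rmult_le_pos; [apply Rlt_le, Hfs | apply Hab]; assumption.
  - apply Hab; assumption.
  - intros x y; rewrite EF; apply sum_Rle; intros i Hi.
    rewrite Rmult_assoc; apply Rmult_le_compat_l; [apply Rlt_le, Hfs, Hi | apply Hab, Hi].
Qed.

Lemma le_low_of_prodD (f : Y1 -> R) (h : Y2 -> R) (g : Y1 -> R) mu :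
  gamble f -> gamble h -> gamble g -> (forall x, 0 <= g x) ->
  prodD BB1 BB2 D1 D2 (fun z => f (fst z) + g (fst z) * h (snd z) - mu) ->
  mu <= low D1 (fun x => f x + g x * low D2 h).
Proof.
  intros gf gh gg Hg HF; set (e := low D2 h).
  destruct (prodD_product_minorants _ HF) as [n [a [b (gab & Hab & Hbound)]]].
  assert (gphi : gamble (fun x => f x + g x * e)).
  { apply gamble_plus; [exact gf | apply gamble_mult; [exact gg | apply gamble_const]]. }
  enough (H : 0 <= low D1 (fun x => (f x + g x * e) + - mu)).
  { rewrite (low_plus_const y1 D1 cD1) in H by exact gphi; lra. }
  apply (low_ge0_of_product_bound _ g (fun y => h y - e) a b n);
    [apply gamble_plus; [exact gphi | apply gamble_const] | exact gg
    | apply gamble_minus; [exact gh | apply gamble_const] | exact gab | | | exact Hab |].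
  - apply (low_ge y1 D1 cD1); assumption.
  - rewrite (low_ext _ _ (fun y => h y + - e)), (low_plus_const y2 D2 cD2)
      by (reflexivity || exact gh).
    unfold e; lra.
  - intros x y; specialize (Hbound x y); simpl in Hbound; lra.
Qed.

Lemma prodD_gamble (F : Y1 * Y2 -> R) : prodD BB1 BB2 D1 D2 F -> gamble F.
Proof.
  apply posi_incl;
    [| intros; apply gamble_scal; assumption | intros; apply gamble_plus; assumption].
  intros G [[[f2 [B1 [Hf2 [_ ->]]]] | [f1 [B2 [Hf1 [_ ->]]]]] | [[gG _] _]].
  - apply gamble_mult; [apply (gamble_snd (X1 := Y1)), (D_gamble D2 cD2), Hf2 |].
    apply (gamble_fst (X2 := Y2)), gamble_ind.
  - apply gamble_mult; [apply (gamble_fst (X2 := Y2)), (D_gamble D1 cD1), Hf1 |].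
    apply (gamble_snd (X1 := Y1)), gamble_ind.
  - exact gG.
Qed.

Lemma prodD_of_D1 (a : Y1 -> R) : D1 a -> prodD BB1 BB2 D1 D2 (fun z => a (fst z)).
Proof.
  intros Ha; apply (transport_pointwise _ (fun z => a (fst z) * ind whole (snd z))).
  - apply posi_gen; left; right; exists a, whole; auto.
  - intros z; unfold ind, whole; ring.
Qed.

Lemma prodD_plus_simple_mul (F : Y1 * Y2 -> R) (gm : Y1 -> R) (H : Y2 -> R) :
  prodD BB1 BB2 D1 D2 F -> simple_meas BB1 gm -> D2 H ->
  prodD BB1 BB2 D1 D2 (fun z => F z + gm (fst z) * H (snd z)).
Proof.
  intros HF [_ [c0 [n [c [Bs [Hc0 [Hc Egm]]]]]]] HH.
  set (gen := fun B (z : Y1 * Y2) => H (snd z) * ind B (fst z)).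
  assert (Hgen : forall B, BB1 B \/ B = whole ->
            (A12 BB1 D2 (gen B) \/ A21 BB2 D1 (gen B)) \/ gamble_gt0 (gen B)).
  { intros B HB; left; left; exists H, B; auto. }
  set (partial := fun m x =>
         c0 + sum_f_R0 (fun k => if Nat.eqb k 0 then 0 else c k * ind (Bs k) x) m).
  assert (Hpartial : forall m, (m <= n)%nat ->
            prodD BB1 BB2 D1 D2 (fun z => F z + partial m (fst z) * H (snd z))).
  { induction m as [|m IH]; intros Hm.
    - apply (transport_pointwise _ (fun z => F z + c0 * gen whole z)).
      + apply posi_plus_nonneg; [exact HF | exact Hc0 | apply Hgen; right; reflexivity].
      + intros z; unfold gen, partial, ind, whole; simpl; ring.
    - apply (transport_pointwise _
               (fun z => (F z + partial m (fst z) * H (snd z)) + c (S m) * gen (Bs (S m)) z)).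
      + apply posi_plus_nonneg; [apply IH; lia | apply Hc; lia | apply Hgen; left; apply Hc; lia].
      + intros z; unfold gen, partial; simpl; ring. }
  apply (transport_pointwise _ _ _ (Hpartial n (le_n n))).
  intros z; unfold partial; rewrite Egm; reflexivity.
Qed.

Lemma prodD_of_marginal_mem (f : Y1 -> R) (h : Y2 -> R) (g : Y1 -> R) mu mu' :
  gamble f -> gamble h -> measurable_g BB1 g ->
  D1 (fun x => f x + g x * low D2 h - mu) -> mu' < mu ->
  prodD BB1 BB2 D1 D2 (fun z => f (fst z) + g (fst z) * h (snd z) - mu').
Proof.
  intros gf gh mg Hphi Hmu; set (e := low D2 h); set (eta := mu - mu').
  assert (Heta : 0 < eta) by (unfold eta; lra).
  destruct (gamble_bound (fun y => h y - e)) as [K [HK0 HK]];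
    [apply gamble_minus; [exact gh | apply gamble_const]|].
  destruct (measurable_approx _ _ (eta / 2 / (K + 1)) mg) as [gm [Hgm Happrox]];
    [apply Rdiv_lt_0_compat; lra|].
  destruct (gamble_bound gm (proj1 (proj1 Hgm))) as [M [HM0 HM]].
  set (delta := eta / 2 / (M + 1)).
  assert (HH : D2 (fun y => h y - (e - delta))).
  { apply (lt_low_mem y2 D2 cD2); [exact gh|].
    assert (0 < delta) by (apply Rdiv_lt_0_compat; lra); unfold e; lra. }
  set (G := fun z : Y1 * Y2 =>
              (f (fst z) + g (fst z) * e - mu) + gm (fst z) * (h (snd z) - (e - delta))).
  assert (HG : prodD BB1 BB2 D1 D2 G).
  { apply (prodD_plus_simple_mul (fun z => f (fst z) + g (fst z) * e - mu) gm
             (fun y => h y - (e - delta))); [apply (prodD_of_D1 _ Hphi) | exact Hgm | exact HH]. }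
  apply (Ecl_up _ G); [exact HG | apply prodD_gamble, HG | |].
  - apply gamble_minus; [|apply gamble_const].
    apply gamble_plus; [apply (gamble_fst (X2 := Y2)), gf|].
    apply gamble_mult; [apply (gamble_fst (X2 := Y2)), (proj1 (proj1 mg)) | apply gamble_snd, gh].
  - intros [x y]; unfold G; simpl.
    assert (Hprod : Rabs ((g x - gm x) * (h y - e)) <= eta / 2).
    { rewrite Rabs_mult.
      apply Rle_trans with (eta / 2 / (K + 1) * K);
        [apply Rmult_le_compat; auto using Rabs_pos |].
      assert (0 <= eta / 2 / (K + 1)) by (apply Rlt_le, Rdiv_lt_0_compat; lra).
      replace (eta / 2) with (eta / 2 / (K + 1) * (K + 1)) at 2 by (field; lra); nra. }
    assert (Hgmd : gm x * delta <= eta / 2).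
    { assert (0 <= delta) by (apply Rlt_le, Rdiv_lt_0_compat; lra).
      specialize (HM x); pose proof (Rle_abs (gm x)).
      replace (eta / 2) with (delta * (M + 1)) by (unfold delta; field; lra); nra. }
    apply Rabs_le_between in Hprod; unfold eta in *; nra.
Qed.

Lemma lowP_D_prodD_measurable (f : Y1 -> R) (h : Y2 -> R) (g : Y1 -> R) :
  gamble f -> gamble h -> measurable_g BB1 g ->
  lowP_D (prodD BB1 BB2 D1 D2) (fun z => f (fst z) + g (fst z) * h (snd z)) whole
  = lowP_D D1 (fun x => f x + g x * low D2 h) whole.
Proof.
  intros gf gh mg; rewrite !lowP_D_whole.
  apply Rbar_le_antisym; apply Lub_Rbar_le_of_approx; intros mu Hmu mu' Hmu'.
  - apply (lt_low_mem y1 D1 cD1).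
    + apply gamble_plus; [exact gf | apply gamble_mult; [apply mg | apply gamble_const]].
    + eapply Rlt_le_trans; [exact Hmu' | apply le_low_of_prodD; try assumption; apply mg].
  - exact (prodD_of_marginal_mem f h g mu mu' gf gh mg Hmu Hmu').
Qed.
End Product.

Lemma prodD_swap {Y1 Y2 : Type} (BB1 : (Y1 -> bool) -> Prop) (BB2 : (Y2 -> bool) -> Prop)
  (D1 : (Y1 -> R) -> Prop) (D2 : (Y2 -> R) -> Prop) (F : Y1 * Y2 -> R) :
  prodD BB1 BB2 D1 D2 F -> prodD BB2 BB1 D2 D1 (fun z => F (snd z, fst z)).
Proof.
  intros [n [lam [fs [Hfs EF]]]].
  exists n, lam, (fun i z => fs i (snd z, fst z)); split; [|intros z; apply EF].
  intros i Hi; destruct (Hfs i Hi) as [Hl Hgen]; split; [exact Hl|].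
  destruct Hgen
    as [[[f2 [B1 [Hf2 [HB ->]]]] | [f1 [B2 [Hf1 [HB ->]]]]] | [[[M HM] Hge] [[x y] Hxy]]].
  - left; right; exists f2, B1; auto.
  - left; left; exists f1, B2; auto.
  - right; split; [split; [exists M; intros; apply HM | intros; apply Hge]|].
    exists (y, x); exact Hxy.
Qed.

Lemma lowP_D_prodD_swap {Y1 Y2 : Type} (BB1 : (Y1 -> bool) -> Prop)
  (BB2 : (Y2 -> bool) -> Prop) (D1 : (Y1 -> R) -> Prop) (D2 : (Y2 -> R) -> Prop)
  (F : Y1 * Y2 -> R) :
  lowP_D (prodD BB1 BB2 D1 D2) F whole
  = lowP_D (prodD BB2 BB1 D2 D1) (fun z => F (snd z, fst z)) whole.
Proof.
  rewrite !lowP_D_whole; apply Lub_Rbar_eqset; intros mu; split; intros H.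
  - exact (prodD_swap _ _ _ _ _ H).
  - apply (transport_pointwise _ _ _ (prodD_swap _ _ _ _ _ H)); intros [x y]; reflexivity.
Qed.

Theorem theorem21 (X1 X2 : Type) (x1 : X1) (x2 : X2)
  (BB1 : (X1 -> bool) -> Prop) (BB2 : (X2 -> bool) -> Prop)
  (hBB1 : forall B, BB1 B -> nonempty_ev B) (hBB2 : forall B, BB2 B -> nonempty_ev B)
  (C1 : (X1 -> R) -> (X1 -> bool) -> Prop) (P1 : (X1 -> R) -> (X1 -> bool) -> Rbar)
  (C2 : (X2 -> R) -> (X2 -> bool) -> Prop) (P2 : (X2 -> R) -> (X2 -> bool) -> Rbar)
  (hC1 : domain_ok C1) (hC2 : domain_ok C2)
  (hP1 : coherent_lp C1 P1) (hP2 : coherent_lp C2 P2) :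
  (* case i = 1, j = 2 *)
  (forall (f : X1 -> R) (h : X2 -> R) (g : X1 -> R),
     gamble f -> gamble h -> measurable_g BB1 g ->
     prodP BB1 BB2 C1 P1 C2 P2
       (fun z => f (fst z) + g (fst z) * h (snd z)) whole
     = natext C1 P1 (fun x => f x + g x * real (natext C2 P2 h whole)) whole)
  /\
  (* case i = 2, j = 1 *)
  (forall (f : X2 -> R) (h : X1 -> R) (g : X2 -> R),
     gamble f -> gamble h -> measurable_g BB2 g ->
     prodP BB1 BB2 C1 P1 C2 P2
       (fun z => f (snd z) + g (snd z) * h (fst z)) whole
     = natext C2 P2 (fun x => f x + g x * real (natext C1 P1 h whole)) whole).
Proof.
  assert (cD1 := EP_coherent C1 P1 hC1 hP1).
  assert (cD2 := EP_coherent C2 P2 hC2 hP2).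
  split; intros f h g gf gh mg; unfold prodP, natext.
  - exact (lowP_D_prodD_measurable x1 x2 BB1 BB2 _ _ cD1 cD2 f h g gf gh mg).
  - rewrite lowP_D_prodD_swap.
    exact (lowP_D_prodD_measurable x2 x1 BB2 BB1 _ _ cD2 cD1 f h g gf gh mg).
Qed.
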